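(* Let $H$ be a graph with $n$ vertices and at least $n+1$ edges. Then $H$ contains a cycle of length at most $\frac{2n}{3}+1$.
   Context: Graphs may contain loops and parallel edges; a loop is a cycle of length 1 and two parallel edges form a cycle of length 2. *)

From mathcomp Require Import all_boot all_order all_algebra.
Set Implicit Arguments. Unset Strict Implicit. Unset Printing Implicit Defensive.

(* A (multi)graph: finite vertex type V, finite edge type E, and an endpoint
   map [ends : E -> V * V] (the pair is read as unordered).  Loops
   ([ends e = (x, x)]) and parallel edges (distinct edges with the same
   endpoints) are allowed. *)

Definition joins (V E : finType) (ends : E -> V * V) (e : E) (x y : V) : bool :=
  (ends e == (x, y)) || (ends e == (y, x)).

(* For k = 1 this is a loop, for k = 2 a pair of
   parallel edges, for k >= 3 an ordinary cycle. *)
Definition is_cycle (V E : finType) (ends : E -> V * V) (k : nat)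
    (vs : 'I_k -> V) (es : 'I_k -> E) : Prop :=
  (0 < k)%N /\ injective vs /\ injective es /\
  forall i : 'I_k, joins ends (es i) (vs i) (vs (ordS i)).

From mathcomp Require Import all_boot all_order all_algebra.
From mathcomp Require Import zify lra.
Import Order.TTheory GRing.Theory Num.Theory.

(* Over F_2, the edge sets in which every vertex has even degree form the left
   kernel of the m x n edge-vertex incidence matrix.  Its rows all sum to
   2 = 0, so it has rank < n and, keeping only m = n + 1 edges, this cycle
   space has dimension >= 2.  Two distinct nonzero elements u, v give three
   nonzero elements u, v, u + v whose supports cover each edge at most twice,
   so one of them has at most 2m/3 edges.  A nonempty even edge set contains a
   cycle, found by following a path until the next edge at its end vertex,
   which exists by evenness, returns to the path. *)

Set Implicit Arguments.
Unset Strict Implicit.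
Unset Printing Implicit Defensive.

Section Incidence.
Variables (V E : finType) (ends : E -> V * V).

Definition incidence (v : V) (e : E) : nat := ((ends e).1 == v) + ((ends e).2 == v).

Definition other_end (e : E) (v : V) : V :=
  if (ends e).1 == v then (ends e).2 else (ends e).1.

Lemma joins_endsP e x y x' y' :
  joins ends e x y -> joins ends e x' y' ->
  (x = x' /\ y = y') \/ (x = y' /\ y = x').
Proof.
by rewrite /joins => /orP[] /eqP -> /orP[] /eqP [-> ->]; [left|right|right|left].
Qed.

Lemma joins_other_end e v : 0 < incidence v e -> joins ends e v (other_end e v).
Proof.
rewrite /incidence /other_end /joins; case: (ends e) => a b /=.
case: eqP => [->|_] /=; first by rewrite eqxx.
by rewrite add0n lt0b => /eqP ->; rewrite eqxx orbT.
Qed.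

Lemma joins_incidence e x y : joins ends e x y -> x != y -> incidence y e = 1.
Proof.
rewrite /joins /incidence => /orP[] /eqP -> /=; rewrite eqxx.
  by rewrite eq_sym => /negbTE ->.
by move=> /negbTE ->.
Qed.

Lemma sum_incidence e : \sum_v incidence v e = 2.
Proof.
have sum_eq1 (x : V) : \sum_v (x == v) = 1.
  by rewrite (bigD1 x) //= eqxx big1 // => v /negbTE; rewrite eq_sym => ->.
by rewrite big_split /= !sum_eq1.
Qed.

End Incidence.

Section CycleInEvenEdgeSet.
Variables (V E : finType) (ends : E -> V * V) (D : {set E}).

Definition even_edges : Prop := forall v, ~~ odd (\sum_(e in D) incidence ends v e).

Definition cycle_in : Prop :=
  exists k (vs : 'I_k -> V) (es : 'I_k -> E),
    is_cycle ends vs es /\ forall i, es i \in D.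

Lemma cycle_size_le_card k (vs : 'I_k -> V) (es : 'I_k -> E) :
  is_cycle ends vs es -> (forall i, es i \in D) -> k <= #|D|.
Proof.
move=> [_ [_ [es_inj _]]] esD.
rewrite -[k]card_ord -(card_imset _ es_inj).
by apply/subset_leq_card/subsetP => _ /imsetP[i _ ->].
Qed.

Lemma loop_cycle e x : e \in D -> joins ends e x x -> cycle_in.
Proof.
move=> eD exx; exists 1, (fun=> x), (fun=> e).
have ord1_inj (T : Type) (f : 'I_1 -> T) : injective f.
  by move=> i j _; rewrite (ord1 i) (ord1 j).
by do 3?split; try exact: ord1_inj.
Qed.

Definition path_in (p : nat) (pv : nat -> V) (pe : nat -> E) : Prop :=
  (forall i j, i <= p -> j <= p -> pv i = pv j -> i = j) /\
  (forall i, i < p -> pe i \in D /\ joins ends (pe i) (pv i) (pv i.+1)).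

Section Path.
Variables (p : nat) (pv : nat -> V) (pe : nat -> E).
Hypothesis path_p : path_in p pv pe.

Lemma path_in_lt_card : p < #|V|.
Proof.
have pv_inj : injective (fun i : 'I_p.+1 => pv i).
  by move=> i j /(path_p.1 _ _ (ltn_ord i) (ltn_ord j)) /val_inj.
by have := leq_card _ pv_inj; rewrite card_ord.
Qed.

Lemma path_in_edge_inj a b : a < p -> b < p -> pe a = pe b -> a = b.
Proof.
case: path_p => pv_inj path_e a_lt b_lt eab.
have [_ ja] := path_e a a_lt; have [_ jb] := path_e b b_lt.
rewrite eab in ja; case: (joins_endsP ja jb) => [[ab _]|[ab1 a1b]].
  by apply: pv_inj ab; apply: ltnW.
have := pv_inj a b.+1 (ltnW a_lt) b_lt ab1.
have := pv_inj a.+1 b a_lt (ltnW b_lt) a1b.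
lia.
Qed.

Lemma path_in_edge_neq f x c :
  f != pe p.-1 -> joins ends f (pv p) x -> c < p -> f != pe c.
Proof.
case: path_p => pv_inj path_e f_last jf c_lt; apply: contraNneq f_last => fc.
have [_] := path_e c c_lt; rewrite -fc => jc.
case: (joins_endsP jf jc) => [[pc _]|[pc1 _]].
  by have := pv_inj _ _ (leqnn p) (ltnW c_lt) pc; lia.
by rewrite fc (pv_inj _ _ (leqnn p) c_lt pc1).
Qed.

Lemma path_in_close f j :
  j < p -> f \in D -> f != pe p.-1 -> joins ends f (pv p) (pv j) -> cycle_in.
Proof.
case: path_p => pv_inj path_e j_lt fD f_last jf.
pose es (i : 'I_(p - j).+1) := if i == p - j :> nat then f else pe (j + i).
exists (p - j).+1, (fun i => pv (j + i)), es.
have pe_in (i : 'I_(p - j).+1) : i != p - j :> nat -> j + i < p.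
  by have := ltn_ord i; lia.
split; last by move=> i; rewrite /es; case: eqP => // /eqP /pe_in /path_e[].
split=> //; split; last split.
- move=> a b /pv_inj ab.
  by apply/val_inj/(@addnI j)/ab; [have := ltn_ord a | have := ltn_ord b]; lia.
- move=> a b; rewrite /es.
  case: eqP => [ea|/eqP/pe_in ea]; case: eqP => [eb|/eqP/pe_in eb].
  + by move=> _; apply/val_inj; rewrite /= ea eb.
  + by move=> fb; case/eqP: (path_in_edge_neq f_last jf eb).
  + by move=> af; case/eqP: (path_in_edge_neq f_last jf ea).
  + by move/(path_in_edge_inj ea eb) => /eqP; rewrite eqn_add2l => /eqP/val_inj.
- move=> i; rewrite /es /=; case: eqP => [ei|/eqP/pe_in i_lt].
    by rewrite ei modnn addn0 subnKC // ltnW.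
  by rewrite modn_small ?addnS; [case: (path_e _ i_lt) | lia].
Qed.

Lemma path_in_extend f w :
  f \in D -> joins ends f (pv p) w -> (forall i, i <= p -> pv i != w) ->
  path_in p.+1 (fun i => if i == p.+1 then w else pv i)
               (fun i => if i == p then f else pe i).
Proof.
case: path_p => pv_inj path_e fD jf w_new; split=> [i j i_le j_le|i i_lt] /=.
  case: eqP => [->|/eqP ni]; case: eqP => [->|/eqP nj] //.
  - by move=> wj; case/eqP: (w_new j ltac:(lia)).
  - by move=> iw; case/eqP: (w_new i ltac:(lia)).
  - by apply: pv_inj; lia.
case: eqP => [->|/eqP ni]; first by rewrite eqxx ltn_eqF.
by rewrite !ifF; [apply: path_e | apply/eqP | apply/eqP]; lia.
Qed.

End Path.

Hypothesis D_even : even_edges.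

Lemma path_in_end_edge p pv pe : path_in p pv pe -> 0 < p ->
  exists2 f, f \in D & (f != pe p.-1) && (0 < incidence ends (pv p) f).
Proof.
move=> [pv_inj path_e] p_gt0.
have [lastD jlast] : pe p.-1 \in D /\ joins ends (pe p.-1) (pv p.-1) (pv p).
  by have := path_e p.-1; rewrite prednK //; apply.
have last_inc : incidence ends (pv p) (pe p.-1) = 1.
  apply: (joins_incidence jlast); apply/eqP => /pv_inj.
  by rewrite leq_pred leqnn => /(_ isT isT); lia.
apply/exists_inP; apply: contraTT (D_even (pv p)) => /exists_inPn no_other.
rewrite (bigD1 (pe p.-1)) //= last_inc big1 // => f /andP[fD f_other].
by have := no_other f fD; rewrite f_other lt0n => /negbNE/eqP.
Qed.

Lemma path_in_cycle p pv pe : path_in p pv pe -> 0 < p -> cycle_in.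
Proof.
have [d] := ubnP (#|V| - p).
elim: d p pv pe => // d IH p pv pe lt_d path_p p_gt0.
have [f fD /andP[f_other f_inc]] := path_in_end_edge path_p p_gt0.
have jf := joins_other_end f_inc.
case: (pickP [pred j : 'I_p.+1 | pv j == other_end ends f (pv p)]) =>
    [j /eqP pv_j|w_new].
  have [j_lt|j_p] : j < p \/ j = p :> nat by have := ltn_ord j; lia.
    by apply: (path_in_close path_p j_lt fD f_other); rewrite pv_j.
  by apply: (loop_cycle fD (x := pv p)); rewrite -{2}j_p pv_j.
apply: (IH p.+1 _ _ _ (path_in_extend path_p fD jf _)) => //.
  by have := path_in_lt_card path_p; lia.
by move=> i i_le; apply/negbT/(w_new (Ordinal (i_le : i < p.+1))).
Qed.

Lemma even_edges_cycle : D != set0 -> cycle_in.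
Proof.
case/set0Pn=> e eD.
case: (eqVneq (ends e).1 (ends e).2) => [loop|no_loop].
  apply: (loop_cycle eD (x := (ends e).1)).
  by rewrite /joins {2}loop -surjective_pairing eqxx.
pose pv i := if i == 0 then (ends e).1 else (ends e).2.
apply: (@path_in_cycle 1 pv (fun=> e)) => //.
split=> [[|[|i]] [|[|j]] //= _ _|[|i] //= _].
- by move/eqP; rewrite (negbTE no_loop).
- by move/esym/eqP; rewrite (negbTE no_loop).
- by rewrite /joins -surjective_pairing eqxx.
Qed.

End CycleInEvenEdgeSet.

Lemma cycle_comp (V E E' : finType) (ends : E -> V * V) (g : E' -> E) k
    (vs : 'I_k -> V) (es : 'I_k -> E') :
  injective g -> is_cycle (ends \o g) vs es -> is_cycle ends vs (g \o es).
Proof.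
by move=> g_inj [k_gt0 [vs_inj [es_inj jes]]]; do !split=> //; apply: inj_comp.
Qed.

Local Open Scope ring_scope.

Lemma mxrank_lt_col (F : fieldType) m n (A : 'M[F]_(m, n)) (c : 'cV_n) :
  c != 0 -> A *m c = 0 -> (\rank A < n)%N.
Proof.
move=> c_neq0 Ac0.
have cT_ker : (c^T <= kermx A^T)%MS by apply/sub_kermxP; rewrite -trmx_mul Ac0 trmx0.
have := mxrankS cT_ker; rewrite mxrank_ker mxrank_tr.
have : (0 < \rank c^T)%N by rewrite lt0n mxrank_eq0 trmx_eq0.
lia.
Qed.

Lemma mxrank_gt1_rows (F : fieldType) m n (K : 'M[F]_(m, n)) :
  (1 < \rank K)%N ->
  exists i1 i2, [&& row i1 K != 0, row i2 K != 0 & row i1 K != row i2 K].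
Proof.
move=> K_rank.
have [i0 i0_neq0] : exists i0, row i0 K != 0.
  apply/existsP; apply: contraTT K_rank => /existsPn K_rows0.
  have -> : K = 0 by apply/row_matrixP => i; rewrite row0; apply/eqP/negPn/K_rows0.
  by rewrite mxrank0.
case: (pickP [pred i | (row i K != 0) && (row i K != row i0 K)]) => [i1 /andP[] | same].
  by exists i1, i0; apply/and3P.
have : (K <= row i0 K)%MS.
  apply/row_subP => i; case: (eqVneq (row i K) 0) => [->|nz]; first exact: sub0mx.
  by have := same i; rewrite /= nz => /negbFE/eqP ->.
by move/mxrankS; have := rank_leq_row (row i0 K); lia.
Qed.

Lemma F2_natr (k : nat) : (k%:R : 'F_2) = (odd k)%:R.
Proof. by rewrite -(Fp_nat_mod (isT : prime 2)) modn2. Qed.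

Lemma F2_eq_natr (a : 'F_2) : a = (a != 0)%:R.
Proof. by case: a => [[|[|]] ?] //; apply/val_inj. Qed.

Lemma F2_oppv (M : lmodType 'F_2) (v : M) : - v = v.
Proof. by rewrite -scaleN1r (oppr_pchar2 (pchar_Fp (isT : prime 2))) scale1r. Qed.

Lemma F2_addv_eq0 (M : lmodType 'F_2) (u v : M) : (u + v == 0) = (u == v).
Proof. by rewrite addr_eq0 F2_oppv. Qed.

Lemma F2_nonzero_count (a b : 'F_2) :
  ((a != 0%R) + (b != 0%R) + (a + b != 0%R)%R <= 2)%N.
Proof. by case: a => [[|[|]] ?]; case: b => [[|[|]] ?]. Qed.

Definition supp m (w : 'rV['F_2]_m) : {set 'I_m} := [set i | w 0 i != 0].

Lemma supp_eq0 m (w : 'rV['F_2]_m) : (supp w == set0) = (w == 0).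
Proof.
apply/eqP/eqP => [w_supp0|->]; last by apply/setP => i; rewrite !inE mxE eqxx.
apply/rowP => i; rewrite mxE; apply/eqP/negbNE.
by have := in_set0 i; rewrite -w_supp0 inE => ->.
Qed.

Lemma card_supp_add m (u v : 'rV['F_2]_m) :
  (#|supp u| + #|supp v| + #|supp (u + v)| <= 2 * m)%N.
Proof.
have card_supp (w : 'rV_m) : #|supp w| = (\sum_i (w 0%R i != 0%R))%N.
  by rewrite -sum1_card big_mkcond; apply: eq_bigr => i _; rewrite inE; case: (_ != _).
rewrite !card_supp -!big_split /=.
apply: (@leq_trans (\sum_(i < m) 2)); last by rewrite sum_nat_const card_ord mulnC.
by apply: leq_sum => i _; rewrite mxE F2_nonzero_count.
Qed.

Lemma supp_le_two_thirds m (u v : 'rV['F_2]_m) :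
  exists2 w, w \in [:: u; v; u + v] & (3 * #|supp w| <= 2 * m)%N.
Proof.
have := card_supp_add u v.
case: (leqP (3 * #|supp u|) (2 * m)) => [u_small _|u_big].
  by exists u; rewrite ?mem_head.
case: (leqP (3 * #|supp v|) (2 * m)) => [v_small _|v_big].
  by exists v; rewrite ?inE ?eqxx ?orbT.
by exists (u + v); [rewrite !inE eqxx !orbT | lia].
Qed.

Section IncidenceMatrix.
Variables (V : finType) (m : nat) (ends : 'I_m -> V * V).

Definition incmx : 'M['F_2]_(m, #|V|) :=
  \matrix_(i < m, j < #|V|) (incidence ends (enum_val j) i)%:R.

Lemma incmxE i j : incmx i j = (incidence ends (enum_val j) i)%:R.
Proof. by rewrite mxE. Qed.

Lemma incmx_rowsum : incmx *m (const_mx 1 : 'cV_#|V|) = 0.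
Proof.
apply/matrixP => i k; rewrite !mxE.
under eq_bigr do rewrite incmxE mxE mulr1.
by rewrite -natr_sum -(big_enum_val (incidence ends ^~ i)) sum_incidence F2_natr.
Qed.

Lemma supp_even (w : 'rV_m) : w *m incmx = 0 -> even_edges ends (supp w).
Proof.
move=> w_ker v; have := congr1 (fun M : 'rV_#|V| => M 0 (enum_rank v)) w_ker.
have -> : (w *m incmx) 0 (enum_rank v) = (\sum_(e in supp w) incidence ends v e)%:R.
  rewrite mxE natr_sum [RHS]big_mkcond; apply: eq_bigr => e _.
  rewrite incmxE enum_rankK inE [w 0 e]F2_eq_natr.
  by case: (_ != _); rewrite ?mul1r ?mul0r.
by rewrite mxE F2_natr; case: odd.
Qed.

Lemma cycle_two_thirds_edges : (#|V| < m)%N ->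
  exists k (vs : 'I_k -> V) (es : 'I_k -> 'I_m),
    is_cycle ends vs es /\ (3 * k <= 2 * m)%N.
Proof.
move=> V_lt_m.
have V_gt0 : (0 < #|V|)%N.
  by apply/card_gt0P; exists (ends (Ordinal (leq_ltn_trans (leq0n _) V_lt_m))).1.
have ones_neq0 : (const_mx 1 : 'cV['F_2]_#|V|) != 0.
  by apply/eqP => /matrixP /(_ (Ordinal V_gt0) 0) /eqP; rewrite !mxE oner_eq0.
have rank_inc := mxrank_lt_col ones_neq0 incmx_rowsum.
have rank_ker : (1 < \rank (kermx incmx))%N by rewrite mxrank_ker; lia.
have [i1 [i2 /and3P[u_neq0 v_neq0 u_neq_v]]] := mxrank_gt1_rows rank_ker.
have ker_row i : row i (kermx incmx) *m incmx = 0 by apply/sub_kermxP/row_sub.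
set u := row i1 _ in u_neq0 u_neq_v; set v := row i2 _ in v_neq0 u_neq_v.
have [w uvw w_small] := supp_le_two_thirds u v.
have [w_neq0 w_ker] : w != 0 /\ w *m incmx = 0.
  move: uvw; rewrite !inE => /or3P[] /eqP ->;
    by rewrite ?F2_addv_eq0 ?mulmxDl ?ker_row ?addr0.
have supp_neq0 : supp w != set0 by rewrite supp_eq0.
have [k [vs [es [cyc es_supp]]]] := even_edges_cycle (supp_even w_ker) supp_neq0.
exists k, vs, es; split=> //.
by apply: leq_trans w_small; rewrite leq_mul2l (cycle_size_le_card cyc es_supp) orbT.
Qed.

End IncidenceMatrix.

Theorem lemma3p2 (V E : finType) (ends : E -> V * V) :
  (#|V| + 1 <= #|E|)%N ->
  exists (k : nat) (vs : 'I_k -> V) (es : 'I_k -> E),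
    is_cycle ends vs es /\
    ((k%:R : rat) <= 2%:R * (#|V|%:R) / 3%:R + 1)%R.
Proof.
rewrite addn1 => E_big.
pose g (i : 'I_#|V|.+1) : E := enum_val (widen_ord E_big i).
have g_inj : injective g by move=> i j /enum_val_inj [] /val_inj.
have [k [vs [es [cyc k_small]]]] := cycle_two_thirds_edges (ends \o g) (ltnSn #|V|).
exists k, vs, (g \o es); split; first exact: cycle_comp cyc.
have : (3 * k)%:R <= (2 * #|V| + 2)%:R :> rat by rewrite ler_nat -mulnSr.
rewrite natrD !natrM; lra.
Qed.
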